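(* Let $A\in M_2(\mathbb F)$ be normal and let $P(A)=\{B\in M_2(\mathbb F): B \text{ normal and } A+B \text{ normal}\}$. Then $\mathrm{Span}_{\mathbb R}P(A)=M_2(\mathbb F)$ if and only if $A\in\mathbb F I$.
   Context: $\mathbb F$ is $\mathbb C$ or $\mathbb R$; a matrix $N$ is normal if $N^*N=NN^*$, where $N^*$ is the conjugate transpose (transpose if real). *)

(* F = R is modelled by an arbitrary realType R, F = C by the
   complex numbers R[i] (mathcomp-real-closed) over a realType R. *)
From HB Require Import structures.
From mathcomp Require Import all_boot all_order all_algebra.
From mathcomp Require Import reals.
From mathcomp Require Import complex.
Set Implicit Arguments. Unset Strict Implicit. Unset Printing Implicit Defensive.
Import Order.TTheory GRing.Theory Num.Theory.
Local Open Scope ring_scope.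

Definition cadj (R : rcfType) (n : nat) (A : 'M[R[i]]_n) : 'M[R[i]]_n :=
  (map_mx (fun z : R[i] => z^*) A)^T.

Definition normal_C (R : rcfType) (n : nat) (A : 'M[R[i]]_n) : Prop :=
  cadj A *m A = A *m cadj A.
Definition normal_R (R : realType) (n : nat) (A : 'M[R]_n) : Prop :=
  A^T *m A = A *m A^T.

Definition P_C (R : rcfType) (n : nat) (A : 'M[R[i]]_n) : 'M[R[i]]_n -> Prop :=
  fun B => normal_C B /\ normal_C (A + B).
Definition P_R (R : realType) (n : nat) (A : 'M[R]_n) : 'M[R]_n -> Prop :=
  fun B => normal_R B /\ normal_R (A + B).

Definition in_real_span (F : numDomainType) (m n : nat)
  (S : 'M[F]_(m, n) -> Prop) (M : 'M[F]_(m, n)) : Prop :=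
  exists (k : nat) (c : 'I_k -> F) (B : 'I_k -> 'M[F]_(m, n)),
    (forall j, c j \is Num.real) /\ (forall j, S (B j)) /\
    M = \sum_(j < k) c j *: B j.

Definition real_span_full (F : numDomainType) (m n : nat)
  (S : 'M[F]_(m, n) -> Prop) : Prop :=
  forall M : 'M[F]_(m, n), in_real_span S M.

From HB Require Import structures.
From mathcomp Require Import all_boot all_order all_algebra.
From mathcomp Require Import reals.
From mathcomp Require Import complex ring lra.
Set Implicit Arguments. Unset Strict Implicit. Unset Printing Implicit Defensive.
Import Order.TTheory GRing.Theory Num.Theory.
Local Open Scope ring_scope.

(* Write [A^*] for the adjoint with respect to a conjugation (the identity
   over R, complex conjugation over C).  For normal A and B,
   (A + B)^*(A + B) - (A + B)(A + B)^* = [A^*, B] + [B^*, A], and this cross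
   term is additive in B and homogeneous for real scalars, so it vanishes on
   the whole real span of P(A).  Conversely, if A = a I then every normal B
   lies in P(A), and every M is the sum of the normal matrices
   (M + M^* ) / 2 and (M - M^* ) / 2.
   If the span is everything, then over C testing the cross term on B and on
   iB separates [A^*, B] = 0, so A^* is central, hence scalar; over R a
   direct 2x2 computation with the matrix units E_00 and E_01 forces A to be
   scalar. *)

Lemma mulmx_delta_entry (R : pzSemiRingType) m n p (X : 'M[R]_(m, n))
    (a : 'I_n) (b : 'I_p) k l :
  (X *m delta_mx a b) k l = X k a *+ (l == b).
Proof.
rewrite mxE (bigD1 a) //= big1 ?addr0 => [|j /negbTE ja]; rewrite mxE.
  by rewrite eqxx /= mulr_natr.
by rewrite ja mulr0.
Qed.

Lemma delta_mulmx_entry (R : pzSemiRingType) m n p (X : 'M[R]_(n, p))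
    (a : 'I_m) (b : 'I_n) k l :
  (delta_mx a b *m X) k l = X b l *+ (k == a).
Proof.
rewrite mxE (bigD1 b) //= big1 ?addr0 => [|j /negbTE jb]; rewrite mxE.
  by rewrite eqxx andbT mulr_natl.
by rewrite jb andbF mul0r.
Qed.

Lemma comm_all_scalar (R : pzSemiRingType) n (X : 'M[R]_n) :
  (forall Y, X *m Y = Y *m X) -> exists a, X = a%:M.
Proof.
case: n X => [|n] X cX; first by exists 0; apply/matrixP=> [[]].
exists (X 0 0); apply/matrixP=> k l; rewrite mxE.
have /matrixP/(_ 0 l) := cX (delta_mx 0 l).
rewrite mulmx_delta_entry delta_mulmx_entry !eqxx !mulr1n => X00.
have /matrixP/(_ k l) := cX (delta_mx l l).
rewrite mulmx_delta_entry delta_mulmx_entry eqxx mulr1n => Xkl.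
by rewrite Xkl X00.
Qed.

Lemma in_real_span_sub (F : numDomainType) m n (S S' : 'M[F]_(m, n) -> Prop) M :
  (forall B, S B -> S' B) -> in_real_span S M -> in_real_span S' M.
Proof.
move=> SS' [k [c [B [cR [SB ->]]]]]; exists k, c, B.
by split=> //; split=> // j; apply: SS'.
Qed.

Section Adjoint.
Variables (F : numFieldType) (conj : {rmorphism F -> F}) (n : nat).
Hypothesis conjK : involutive conj.
Local Notation M := 'M[F]_n.

Definition adjmx (A : M) : M := (map_mx conj A)^T.

Lemma adjmxD A B : adjmx (A + B) = adjmx A + adjmx B.
Proof. by apply/matrixP=> i j; rewrite !mxE rmorphD. Qed.

Lemma adjmx0 : adjmx 0 = 0.
Proof. by apply/matrixP=> i j; rewrite !mxE rmorph0. Qed.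

Lemma adjmxN A : adjmx (- A) = - adjmx A.
Proof. by apply/matrixP=> i j; rewrite !mxE rmorphN. Qed.

Lemma adjmxZ c A : adjmx (c *: A) = conj c *: adjmx A.
Proof. by apply/matrixP=> i j; rewrite !mxE rmorphM. Qed.

Lemma adjmx_scalar a : adjmx a%:M = (conj a)%:M.
Proof. by rewrite /adjmx map_scalar_mx tr_scalar_mx. Qed.

Lemma adjmxK : involutive adjmx.
Proof. by move=> A; apply/matrixP=> i j; rewrite !mxE conjK. Qed.

Definition normalmx A := adjmx A *m A = A *m adjmx A.

Definition normal_defect A := adjmx A *m A - A *m adjmx A.

Definition normal_cross A B :=
  adjmx A *m B - B *m adjmx A + (adjmx B *m A - A *m adjmx B).

Definition normal_partners A B := normalmx B /\ normalmx (A + B).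

Lemma normalmxE A : normalmx A <-> normal_defect A = 0.
Proof. by split=> [nA | /subr0_eq //]; rewrite /normal_defect nA subrr. Qed.

Lemma normal_defectD A B :
  normal_defect (A + B) = normal_defect A + normal_defect B + normal_cross A B.
Proof.
rewrite /normal_defect /normal_cross adjmxD !mulmxDl !mulmxDr.
by apply/matrixP=> i j; rewrite !mxE; ring.
Qed.

Lemma normal_cross_eq0 A B :
  normalmx A -> normalmx B -> normalmx (A + B) -> normal_cross A B = 0.
Proof.
move=> /normalmxE nA /normalmxE nB /normalmxE.
by rewrite normal_defectD nA nB !add0r.
Qed.

Lemma normal_crossD A X Y :
  normal_cross A (X + Y) = normal_cross A X + normal_cross A Y.
Proof.
rewrite /normal_cross adjmxD !mulmxDl !mulmxDr.
by apply/matrixP=> i j; rewrite !mxE; ring.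
Qed.

Lemma normal_crossZ A X c :
  normal_cross A (c *: X) = c *: (adjmx A *m X - X *m adjmx A)
                            + conj c *: (adjmx X *m A - A *m adjmx X).
Proof.
rewrite /normal_cross adjmxZ -!scalemxAl -!scalemxAr.
by apply/matrixP=> i j; rewrite !mxE; ring.
Qed.

Lemma normal_cross_scalar a B : normal_cross a%:M B = 0.
Proof. by rewrite /normal_cross adjmx_scalar !scalar_mxC !subrr addr0. Qed.

Lemma normalmx_scalarD a B : normalmx B -> normalmx (a%:M + B).
Proof.
move=> /normalmxE nB; apply/normalmxE.
by rewrite normal_defectD normal_cross_scalar nB /normal_defect adjmx_scalar
  scalar_mxC subrr !addr0.
Qed.

Lemma normalmx_selfadj B : adjmx B = B -> normalmx B.
Proof. by rewrite /normalmx => ->. Qed.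

Lemma normalmx_skewadj B : adjmx B = - B -> normalmx B.
Proof. by rewrite /normalmx => ->; rewrite mulNmx mulmxN. Qed.

Lemma real_span_full_scalar a : real_span_full (normal_partners a%:M).
Proof.
move=> N; pose H := N + adjmx N; pose K := N - adjmx N.
have nH : normalmx H by apply: normalmx_selfadj; rewrite adjmxD adjmxK addrC.
have nK : normalmx K.
  by apply: normalmx_skewadj; rewrite adjmxD adjmxN adjmxK opprB addrC.
exists 2%N, (fun _ => 2^-1), (fun j => if val j == 0%N then H else K).
split; first by move=> j; rewrite rpredV realn.
split.
  by move=> j; case: ifP => _; split; try apply: normalmx_scalarD.
rewrite !big_ord_recl big_ord0 /= addr0 -scalerDr addrACA subrr addr0.
by rewrite -mulr2n -scaler_nat scalerA mulVf ?scale1r ?pnatr_eq0.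
Qed.

Hypothesis conj_real : forall c, c \is Num.real -> conj c = c.

Lemma normal_cross_real_span A N :
  normalmx A -> in_real_span (normal_partners A) N -> normal_cross A N = 0.
Proof.
move=> nA [k [c [B [cR [PB ->]]]]].
apply: (big_rec (fun X => normal_cross A X = 0)).
  by rewrite /normal_cross adjmx0 !mul0mx !mulmx0 subrr addr0.
move=> j X _ hX; have [nB nAB] := PB j.
rewrite normal_crossD hX addr0 normal_crossZ conj_real // -scalerDr.
by have := normal_cross_eq0 nA nB nAB; rewrite /normal_cross => ->; rewrite scaler0.
Qed.

Lemma normal_cross_kernel_scalar A c : conj c != c ->
  (forall X, normal_cross A X = 0) -> exists a, A = a%:M.
Proof.
move=> cc cross0.
have comm X : adjmx A *m X = X *m adjmx A.
  have UV : adjmx A *m X - X *m adjmx A = - (adjmx X *m A - A *m adjmx X).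
    by apply/eqP; rewrite -addr_eq0; apply/eqP/cross0.
  apply/eqP; rewrite -subr_eq0 UV oppr_eq0.
  have /eqP := cross0 (c *: X); rewrite normal_crossZ UV scalerN -scaleNr.
  by rewrite -scalerDl scaler_eq0 addrC subr_eq0 (negbTE cc).
have [b Ab] := comm_all_scalar comm.
by exists (conj b); rewrite -[A]adjmxK Ab adjmx_scalar.
Qed.

Lemma real_span_full_normal_partners A c : conj c != c -> normalmx A ->
  real_span_full (normal_partners A) <-> exists a, A = a%:M.
Proof.
move=> cc nA; split=> [full | [a ->]]; last exact: real_span_full_scalar.
apply: (normal_cross_kernel_scalar cc) => X.
exact: normal_cross_real_span (full X).
Qed.

End Adjoint.

Lemma adjmx_id (F : numFieldType) n (A : 'M[F]_n) : adjmx idfun A = A^T.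
Proof. by rewrite /adjmx map_mx_id. Qed.

Lemma real_span_full_P_R (R : realType) n (A : 'M[R]_n) :
  real_span_full (P_R A) <-> real_span_full (normal_partners idfun A).
Proof.
have P_RE B : P_R A B <-> normal_partners idfun A B.
  by rewrite /P_R /normal_partners /normalmx !adjmx_id.
by split=> full M; apply: in_real_span_sub (full M) => B /P_RE.
Qed.

Lemma normal_cross_kernel_scalar_real2 (R : realFieldType) (A : 'M[R]_2) :
  normal_cross idfun A (delta_mx 0 0) = 0 ->
  normal_cross idfun A (delta_mx 0 1) = 0 -> exists a, A = a%:M.
Proof.
rewrite /normal_cross !adjmx_id !trmx_delta => /matrixP h00 /matrixP h01.
have := h00 0 1; have := h01 0 0; have := h01 0 1.
rewrite !(mulmx_delta_entry, delta_mulmx_entry, mxE) /= ?mulr1n ?mulr0n.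
move=> e1 e2 e3.
have A01 : A 0 1 = 0 by lra.
have A10 : A 1 0 = 0 by lra.
have A11 : A 1 1 = A 0 0 by lra.
have ord2 (k : 'I_2) : k = 0 \/ k = 1.
  by case: k => [[|[|//]] ?]; [left | right]; apply: val_inj.
exists (A 0 0); apply/matrixP=> i j; rewrite mxE.
by case: (ord2 i) => ->; case: (ord2 j) => ->; rewrite ?A01 ?A10 ?A11.
Qed.

Theorem mainTheorem12 :
  (forall (R : realType) (A : 'M[R]_2), normal_R A ->
     (real_span_full (P_R A) <-> exists a : R, A = a%:M)) /\
  (forall (R : realType) (A : 'M[R[i]]_2), normal_C A ->
     (real_span_full (P_C A) <-> exists a : R[i], A = a%:M)).
Proof.
split=> R A nA.
- rewrite real_span_full_P_R; split=> [full | [a ->]].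
    have nA' : normalmx idfun A by rewrite /normalmx adjmx_id.
    have id_real (c : R) : c \is Num.real -> idfun c = c by [].
    have cross0 X := normal_cross_real_span id_real nA' (full X).
    exact: normal_cross_kernel_scalar_real2 (cross0 _) (cross0 _).
  exact: real_span_full_scalar.
- have ci : ('i : R[i])^* != 'i.
    by rewrite conjCi eq_sym -addr_eq0 -mulr2n mulrn_eq0 neq0Ci.
  exact (real_span_full_normal_partners (@conjCK R[i]) (@conj_Creal R[i]) ci nA).
Qed.
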